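(* If $H$ is a butterfly minor of a digraph $D$, then $\operatorname{dbw}(H)\le\operatorname{dbw}(D)$.
   Context: All digraphs are finite and loopless. An edge $\vec{xy}$ of $D$ is a butterfly edge if $x$ has out-degree $1$ and $y$ has in-degree $1$. Contracting $\vec{xy}$ removes $\vec{xy}$, $x$, $y$ and adds a new vertex with in-neighbourhood $(N^-(x)\cup N^-(y))\setminus\{x,y\}$ and out-neighbourhood $(N^+(x)\cup N^+(y))\setminus\{x,y\}$. $H$ is a butterfly minor of $D$ if it is obtained from a subgraph of $D$ by a sequence of contractions of butterfly edges. Directed branch-width: for $X\subseteq E(D)$, $S^V_X=\{y: \exists x,z,\ \vec{xy}\in E(D)\setminus X,\ \vec{yz}\in X\}$; $\operatorname{dbw}(D)$ is the minimum over $(T,\beta)$ ($T$ a tree of maximum degree at most three, $\beta$ a bijection from leaves onto $E(D)$) of the maximum over tree edges of $|S^V_{\beta(Y)}\cup S^V_{E(D)\setminus\beta(Y)}|$, $Y$ the leaves on one side (0 if no tree edges). *)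

From mathcomp Require Import all_boot.
From Stdlib Require Import ClassicalEpsilon.
Set Implicit Arguments. Unset Strict Implicit. Unset Printing Implicit Defensive.

(* A finite loopless (simple) digraph is given by a finite vertex type V and
   an irreflexive edge relation E : rel V.  Its edge set is arcs E. *)
Definition arcs (V : finType) (E : rel V) : {set V * V} :=
  [set p : V * V | E p.1 p.2].

Definition SV (V : finType) (E : rel V) (X : {set V * V}) : {set V} :=
  [set y | [exists x, exists z,
     ((x, y) \in arcs E :\: X) && ((y, z) \in X)]].

(* A tree on the vertex set 'I_n.+1 (nonempty): symmetric, irreflexive,
   connected, and acyclic (every edge is a bridge: deleting it disconnects
   its endpoints). *)
Definition del_edge (n : nat) (t : rel 'I_n) (a b : 'I_n) : rel 'I_n :=
  fun u v => t u v && ~~ (((u == a) && (v == b)) || ((u == b) && (v == a))).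

Definition is_tree (n : nat) (t : rel 'I_n.+1) : Prop :=
  symmetric t /\ irreflexive t /\
  (forall u v, connect t u v) /\
  (forall a b, t a b -> ~~ connect (del_edge t a b) a b).

Definition tdeg (n : nat) (t : rel 'I_n.+1) (a : 'I_n.+1) : nat :=
  #|[set b | t a b]|.

(* leaves: vertices of degree at most 1 (a one-vertex tree is its own leaf) *)
Definition leaves (n : nat) (t : rel 'I_n.+1) : {set 'I_n.+1} :=
  [set l | tdeg t l <= 1].

Definition branch_decomp (V : finType) (E : rel V)
    (n : nat) (t : rel 'I_n.+1) (beta : 'I_n.+1 -> V * V) : Prop :=
  is_tree t /\ (forall a, tdeg t a <= 3) /\
  {in leaves t, forall l, beta l \in arcs E} /\
  {in leaves t &, injective beta} /\
  (forall e, e \in arcs E -> exists2 l, l \in leaves t & beta l = e).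

Definition side_leaves (n : nat) (t : rel 'I_n.+1) (a b : 'I_n.+1)
  : {set 'I_n.+1} := [set l in leaves t | connect (del_edge t a b) a l].

Definition edge_width (V : finType) (E : rel V)
    (n : nat) (t : rel 'I_n.+1) (beta : 'I_n.+1 -> V * V) (a b : 'I_n.+1)
  : nat :=
  let X := beta @: side_leaves t a b in
  #|SV E X :|: SV E (arcs E :\: X)|.

(* width of (T,beta): max over tree edges, 0 if there is none *)
Definition decomp_width (V : finType) (E : rel V)
    (n : nat) (t : rel 'I_n.+1) (beta : 'I_n.+1 -> V * V) : nat :=
  \max_(p : 'I_n.+1 * 'I_n.+1 | t p.1 p.2) edge_width E t beta p.1 p.2.

(* k is the width of some branch decomposition of D (or D has no edges and
   k = 0, the convention for the edgeless digraph) *)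
Definition dbw_attained (V : finType) (E : rel V) (k : nat) : Prop :=
  (arcs E = set0 /\ k = 0) \/
  exists n (t : rel 'I_n.+1) (beta : 'I_n.+1 -> V * V),
    branch_decomp E t beta /\ decomp_width E t beta = k.

Definition dbw (V : finType) (E : rel V) : nat :=
  epsilon (inhabits 0%N)
    (fun k => dbw_attained E k /\ forall j, dbw_attained E j -> k <= j).

(* intermediate digraphs living inside the vertex type V of D:
   a vertex set and an edge set *)
Definition sdigraph (V : finType) : Type := ({set V} * {set V * V})%type.

Definition outN (V : finType) (B : {set V * V}) (x : V) : {set V} :=
  [set z | (x, z) \in B].
Definition inN (V : finType) (B : {set V * V}) (y : V) : {set V} :=
  [set u | (u, y) \in B].

Definition butterfly_edge (V : finType) (G : sdigraph V) (x y : V) : bool :=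
  [&& (x, y) \in G.2, #|outN G.2 x| == 1 & #|inN G.2 y| == 1].

(* contraction of xy; the new vertex is named x (y is deleted) *)
Definition contract (V : finType) (G : sdigraph V) (x y : V) : sdigraph V :=
  let B := G.2 in
  let Nin := (inN B x :|: inN B y) :\: [set x; y] in
  let Nout := (outN B x :|: outN B y) :\: [set x; y] in
  (G.1 :\ y,
   [set p in B | (p.1 \notin [set x; y]) && (p.2 \notin [set x; y])]
     :|: [set (u, x) | u in Nin] :|: [set (x, w) | w in Nout]).

Inductive contracts (V : finType) : sdigraph V -> sdigraph V -> Prop :=
  | contracts_refl G : contracts G G
  | contracts_step G x y G' :
      butterfly_edge G x y -> contracts (contract G x y) G' -> contracts G G'.

(* H = (W,F) is a butterfly minor of D = (V,E): H is isomorphic to a digraph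
   obtained from a subgraph of D by a sequence of butterfly contractions *)
Definition butterfly_minor (W : finType) (F : rel W) (V : finType) (E : rel V)
  : Prop :=
  exists (A : {set V}) (B : {set V * V}),
    B \subset arcs E /\ (forall p, p \in B -> (p.1 \in A) && (p.2 \in A)) /\
    exists G' : sdigraph V, contracts (A, B) G' /\
      exists f : W -> V,
        injective f /\ (forall v, v \in G'.1 <-> exists w, f w = v) /\
        (forall u w, F u w = ((f u, f w) \in G'.2)).

(* We work with "relaxed" branch decompositions of an arc set B:
   a tree of maximum degree 3 whose nodes carry optional arc labels, such that
   labelled nodes are leaves and the labelling is a bijection onto B, but
   unlabelled leaves are allowed.  The width of a tree edge is computed from
   the arcs labelling one side, exactly as for branch decompositions.

   1. Transfer: a partial map g on arcs that is a bijection from B onto B',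
      together with a vertex map f such that the boundary of every g-image is
      contained in the f-image of the original boundary, turns a relaxed
      decomposition of B of width k into one of B' of width k (relabel by g).
   2. Taking a subgraph, contracting a butterfly edge (merge y into x) and
      transporting along the isomorphism onto H are all instances of 1.
   3. Pruning: deleting unlabelled leaves one at a time turns a relaxed
      decomposition of a nonempty arc set into a genuine branch decomposition
      of no larger width.
   4. Every digraph with arcs has a branch decomposition (a heap-shaped tree),
      so dbw D is an attained minimum; the theorem follows by chaining 2 and 3
      starting from an optimal decomposition of D. *)

From mathcomp Require Import all_boot zify.
From Stdlib Require Import ClassicalEpsilon Classical.
Set Implicit Arguments. Unset Strict Implicit. Unset Printing Implicit Defensive.

(* The vertex boundary S^V_X of X relative to an ambient arc set B;
   [SV E X] is [boundary (arcs E) X]. *)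
Definition boundary (V : finType) (B X : {set V * V}) : {set V} :=
  [set y | [exists x, exists z, ((x, y) \in B :\: X) && ((y, z) \in X)]].

Lemma boundaryP (V : finType) (B X : {set V * V}) (y : V) :
  reflect (exists x z, [/\ (x, y) \in B, (x, y) \notin X & (y, z) \in X])
          (y \in boundary B X).
Proof.
apply: (iffP idP) => [|[x [z [xyB xyX yzX]]]].
  rewrite inE => /existsP[x /existsP[z]]; rewrite !inE => /andP[/andP[xyX xyB] yzX].
  by exists x, z.
by rewrite inE; apply/existsP; exists x; apply/existsP; exists z; rewrite !inE xyB xyX yzX.
Qed.

Section Relaxed.
Variables (V : finType) (B : {set V * V}) (n : nat).
Implicit Types (t : rel 'I_n.+1) (lab : 'I_n.+1 -> option (V * V)).

Definition side_arcs t lab (a b : 'I_n.+1) : {set V * V} :=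
  [set e | [exists l, connect (del_edge t a b) a l && (lab l == Some e)]].

Definition relaxed_width t lab (a b : 'I_n.+1) : nat :=
  #|boundary B (side_arcs t lab a b) :|: boundary B (B :\: side_arcs t lab a b)|.

Record relaxed_decomp t lab (k : nat) : Prop := RelaxedDecomp {
  rd_tree : is_tree t;
  rd_deg : forall a, tdeg t a <= 3;
  rd_leaf : forall a, lab a != None -> tdeg t a <= 1;
  rd_inj : forall a b e, lab a = Some e -> lab b = Some e -> a = b;
  rd_onto : forall e, e \in B <-> exists a, lab a = Some e;
  rd_width : forall a b, t a b -> relaxed_width t lab a b <= k }.

Lemma side_arcs_sub t lab k a b :
  relaxed_decomp t lab k -> side_arcs t lab a b \subset B.
Proof.
move=> rd; apply/subsetP => e; rewrite inE => /existsP[l /andP[_ /eqP le]].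
by apply/(rd_onto rd); exists l.
Qed.

End Relaxed.

Definition has_relaxed (V : finType) (B : {set V * V}) (k : nat) : Prop :=
  exists n (t : rel 'I_n.+1) lab, relaxed_decomp B t lab k.

Section Transfer.
Variables (V U : finType) (B : {set V * V}) (B' : {set U * U}).
Variables (g : V * V -> option (U * U)) (f : V -> U).

Definition arc_image (X : {set V * V}) : {set U * U} :=
  [set e' | [exists e, (e \in X) && (g e == Some e')]].

Hypothesis g_inj : forall e1 e2 e', e1 \in B -> e2 \in B ->
  g e1 = Some e' -> g e2 = Some e' -> e1 = e2.
Hypothesis g_onto : forall e', e' \in B' <-> exists2 e, e \in B & g e = Some e'.
Hypothesis g_boundary : forall X : {set V * V}, X \subset B ->
  boundary B' (arc_image X) \subset f @: boundary B X.

Lemma arc_image_compl (X : {set V * V}) :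
  X \subset B -> B' :\: arc_image X = arc_image (B :\: X).
Proof.
move=> XB; apply/setP => e'; rewrite !inE; apply/andP/existsP.
- move=> [/existsP Hn /g_onto [e eB ge]]; exists e; rewrite !inE eB ge eqxx !andbT.
  by apply/negP => eX; apply: Hn; exists e; rewrite eX ge eqxx.
- move=> [e /andP[]]; rewrite !inE => /andP[eX eB] /eqP ge.
  split; last by apply/g_onto; exists e.
  apply/existsP => -[e1 /andP[e1X /eqP ge1]].
  by move: eX; rewrite -(g_inj (subsetP XB _ e1X) eB ge1 ge) e1X.
Qed.

Lemma side_arcs_relabel n (t : rel 'I_n.+1) lab a b :
  side_arcs t (fun l => obind g (lab l)) a b = arc_image (side_arcs t lab a b).
Proof.
apply/setP => e'; rewrite !inE; apply/existsP/existsP.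
- move=> [l /andP[cl]]; case El: (lab l) => [e|] //= /eqP ge.
  by exists e; rewrite ge eqxx andbT inE; apply/existsP; exists l; rewrite cl El eqxx.
- move=> [e /andP[]]; rewrite inE => /existsP [l /andP[cl /eqP El]] /eqP ge.
  by exists l; rewrite cl El /= ge eqxx.
Qed.

Lemma relaxed_decomp_transfer n (t : rel 'I_n.+1) lab k :
  relaxed_decomp B t lab k -> relaxed_decomp B' t (fun l => obind g (lab l)) k.
Proof.
move=> rd; have [tr deg leaf inj onto wd] := rd.
have labB l e : lab l = Some e -> e \in B by move=> le; apply/onto; exists l.
split=> // [a|a b e'|e'|a b tab].
- by case E: (lab a) => [e|] //= _; apply: leaf; rewrite E.
- case Ea: (lab a) => [ea|] //=; case Eb: (lab b) => [eb|] //= ga gb.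
  have eab := g_inj (labB _ _ Ea) (labB _ _ Eb) ga gb; subst eb; exact: inj Ea Eb.
- split=> [/g_onto [e /onto [a Ea] ge]|[a]]; first by exists a; rewrite Ea.
  by case Ea: (lab a) => [e|] //= ge; apply/g_onto; exists e; first exact: labB Ea.
- have XB := side_arcs_sub a b rd.
  rewrite /relaxed_width side_arcs_relabel arc_image_compl //.
  apply: leq_trans (wd a b tab); apply: leq_trans (leq_imset_card f _).
  apply: subset_leq_card; rewrite imsetU.
  by apply: setUSS; apply: g_boundary => //; apply: subsetDl.
Qed.

Lemma has_relaxed_transfer k : has_relaxed B k -> has_relaxed B' k.
Proof.
move=> [n [t [lab rd]]]; exists n, t, (fun l => obind g (lab l)).
exact: relaxed_decomp_transfer.
Qed.

End Transfer.

Lemma has_relaxed_sub (V : finType) (B B' : {set V * V}) k :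
  B' \subset B -> has_relaxed B k -> has_relaxed B' k.
Proof.
move=> sub.
apply: (has_relaxed_transfer (g := fun e => if e \in B' then Some e else None) (f := id)).
- by move=> e1 e2 e' _ _; case: ifP => // _ [<-]; case: ifP => // _ [<-].
- move=> e'; split=> [e'B'|[e _]]; last by case: ifP => // eB' [<-].
  by exists e'; [apply: (subsetP sub) | rewrite e'B'].
- move=> X XB'; apply/subsetP => y /boundaryP [x [z [xyB' xyX]]].
  rewrite inE => /existsP[e /andP[eX]].
  case: ifP => // eB' /eqP[ee]; subst e.
  apply/imsetP; exists y => //; apply/boundaryP; exists x, z; split=> //.
  + exact: (subsetP sub).
  + apply: contra xyX => xyX'; rewrite inE; apply/existsP.
    by exists (x, y); rewrite xyX' xyB' eqxx.
Qed.

Definition wf_sdigraph (V : finType) (G : sdigraph V) : Prop :=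
  forall p, p \in G.2 -> [&& p.1 \in G.1, p.2 \in G.1 & p.1 != p.2].

Lemma mem_imset_head (V : finType) (A : {set V}) (c a b : V) :
  ((a, b) \in [set (u, c) | u in A]) = (b == c) && (a \in A).
Proof.
apply/imsetP/andP => [[u uA [-> ->]]|[/eqP -> aA]]; first by rewrite eqxx.
by exists a.
Qed.

Lemma mem_imset_tail (V : finType) (A : {set V}) (c a b : V) :
  ((a, b) \in [set (c, w) | w in A]) = (a == c) && (b \in A).
Proof.
apply/imsetP/andP => [[w wA [-> ->]]|[/eqP -> bA]]; first by rewrite eqxx.
by exists b.
Qed.

Section Contraction.
Variables (V : finType) (G : sdigraph V) (x y : V).
Hypothesis loopless : forall p, p \in G.2 -> p.1 != p.2.
Hypothesis bxy : butterfly_edge G x y.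

Local Notation B := G.2.

(* contracting xy merges y into x; an arc survives iff it is not merged into
   a loop, i.e. unless it is xy or a reverse arc yx *)
Let merge (v : V) : V := if v == y then x else v.
Let merged_arc (e : V * V) : option (V * V) :=
  if merge e.1 == merge e.2 then None else Some (merge e.1, merge e.2).

Lemma butterfly_arc : (x, y) \in B. Proof. by case/and3P: bxy. Qed.
Lemma butterfly_neq : x != y. Proof. exact: (loopless butterfly_arc). Qed.

Lemma butterfly_out w : (x, w) \in B -> w = y.
Proof.
case/and3P: bxy => xy /cards1P [z Hz] _ xw.
have : y \in outN B x by rewrite inE.
have : w \in outN B x by rewrite inE.
by rewrite Hz !inE => /eqP -> /eqP ->.
Qed.

Lemma butterfly_in u : (u, y) \in B -> u = x.
Proof.
case/and3P: bxy => xy _ /cards1P [z Hz] uy.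
have : x \in inN B y by rewrite inE.
have : u \in inN B y by rewrite inE.
by rewrite Hz !inE => /eqP -> /eqP ->.
Qed.

Lemma merge_id v : v != y -> merge v = v. Proof. by rewrite /merge => /negbTE ->. Qed.
Lemma merge_x : merge x = x. Proof. exact: merge_id butterfly_neq. Qed.
Lemma merge_y : merge y = x. Proof. by rewrite /merge eqxx. Qed.
Lemma merge_neq_y v : merge v != y.
Proof. by rewrite /merge; case: (eqVneq v y) => // _; exact: butterfly_neq. Qed.

Lemma merged_arcP e p : merged_arc e = Some p ->
  [/\ merge e.1 = p.1, merge e.2 = p.2 & merge e.1 != merge e.2].
Proof. by rewrite /merged_arc; case: ifP => // /negbT ? [<-]. Qed.

Lemma surviving_arc a b : (a, b) \in B -> merge a != merge b -> a != x /\ b != y.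
Proof.
move=> abB ne; split; apply: contraNneq ne => end_eq; subst.
- by rewrite (butterfly_out abB) merge_x merge_y.
- by rewrite (butterfly_in abB) merge_x merge_y.
Qed.

Lemma merge_inj a a' : a != x -> a' != x -> merge a = merge a' -> a = a'.
Proof.
rewrite /merge; case: (eqVneq a y) => [->|_]; case: (eqVneq a' y) => [->|_] //.
- by move=> _ /eqP a'x /esym /a'x.
- by move=> /eqP ax _ /ax.
Qed.

Lemma merged_arc_inj e e' p : e \in B -> e' \in B ->
  merged_arc e = Some p -> merged_arc e' = Some p -> e = e'.
Proof.
case: e e' => a b [a' b'] abB abB'.
move=> /merged_arcP [/= ha hb ne] /merged_arcP [/= ha' hb' ne'].
have [ax b_y] := surviving_arc abB ne; have [a'x b'y] := surviving_arc abB' ne'.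
rewrite (merge_inj ax a'x (etrans ha (esym ha'))).
by move: hb hb'; rewrite !merge_id // => -> ->.
Qed.

Lemma contract_arcsP p :
  p \in (contract G x y).2 <-> exists2 e, e \in B & merged_arc e = Some p.
Proof.
case: p => a b; rewrite /contract /= !inE mem_imset_head mem_imset_tail !inE.
split=> [|[[c d] cdB /merged_arcP [/= <- <- ne]]].
- case/orP => [/orP[|]|].
  + case/and3P => abB /norP[ax ay] /norP[bx b_y]; exists (a, b) => //.
    by rewrite /merged_arc /= !merge_id // (negbTE (loopless abB)).
  + case/and3P => /eqP -> /norP[ax ay] /orP[axB|ayB]; last first.
      by move: ax; rewrite (butterfly_in ayB) eqxx.
    by exists (a, x); rewrite // /merged_arc /= merge_x merge_id // (negbTE ax).
  + case/and3P => /eqP -> /norP[bx b_y] /orP[xbB|ybB].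
      by move: b_y; rewrite (butterfly_out xbB) eqxx.
    by exists (y, b); rewrite // /merged_arc /= merge_y merge_id // eq_sym (negbTE bx).
- have [cx dy] := surviving_arc cdB ne; rewrite (merge_id dy) in ne *.
  case: (eqVneq c y) => [cy|cy].
    subst c; rewrite merge_y in ne *; have dx : d != x by rewrite eq_sym.
    by rewrite eqxx (negbTE dx) (negbTE dy) cdB !orbT.
  rewrite merge_id // in ne *; case: (eqVneq d x) => [dx|dx].
    by subst d; rewrite (negbTE cx) (negbTE cy) cdB /=.
  by rewrite cdB /= (negbTE cx) (negbTE cy) (negbTE dy).
Qed.

Lemma contract_boundary (X : {set V * V}) : X \subset B ->
  boundary (contract G x y).2 (arc_image merged_arc X) \subset merge @: boundary B X.
Proof.
move=> XB; apply/subsetP => v.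
move=> /boundaryP [u [w [/contract_arcsP [[a' b'] e'B ge'] uvX]]].
rewrite inE => /existsP [[a b] /andP[abX /eqP ge]].
have e'X : (a', b') \notin X.
  apply: contra uvX => e'X; rewrite inE; apply/existsP.
  by exists (a', b'); rewrite e'X ge' eqxx.
have [/= _ hb' ne'] := merged_arcP ge'; have [/= ha _ ne] := merged_arcP ge.
have [_ b'y] := surviving_arc e'B ne'; have [ax _] := surviving_arc (subsetP XB _ abX) ne.
rewrite (merge_id b'y) in hb'; subst v b'.
case: (eqVneq a y) => [ay|ay].
- subst a; rewrite merge_y in e'B e'X *.
  have [xyX|xyX] := boolP ((x, y) \in X).
    by rewrite -{1}merge_x; apply: imset_f; apply/boundaryP; exists a', y.
  by rewrite -merge_y; apply: imset_f; apply/boundaryP; exists x, b; rewrite butterfly_arc.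
- rewrite merge_id // in e'B e'X *; rewrite -{1}(merge_id ay).
  by apply: imset_f; apply/boundaryP; exists a', b.
Qed.

Lemma has_relaxed_contract k : has_relaxed B k -> has_relaxed (contract G x y).2 k.
Proof.
apply: (has_relaxed_transfer (g := merged_arc) (f := merge)).
- exact: merged_arc_inj.
- exact: contract_arcsP.
- exact: contract_boundary.
Qed.

Lemma contract_wf : wf_sdigraph G -> wf_sdigraph (contract G x y).
Proof.
move=> wfG [a b] /contract_arcsP [[c d] cdB] /merged_arcP [/= <- <- ->].
have xG : x \in G.1 by case/and3P: (wfG _ butterfly_arc).
case/and3P: (wfG _ cdB) => /= cG dG _.
have merge_in v : v \in G.1 -> merge v \in G.1 :\ y.
  by rewrite in_setD1 merge_neq_y /merge; case: ifP.
by rewrite /= !merge_in.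
Qed.

End Contraction.

Section Isomorphism.
Variables (V W : finType) (A : {set V}) (B : {set V * V}) (F : rel W) (f : W -> V).
Hypothesis f_inj : injective f.
Hypothesis f_onto : forall v, v \in A <-> exists w, f w = v.
Hypothesis f_arcs : forall u w, F u w = ((f u, f w) \in B).
Hypothesis B_in_A : forall p, p \in B -> (p.1 \in A) && (p.2 \in A).
Variable w0 : W.

Let finv (v : V) : W := odflt w0 [pick w | f w == v].

Lemma finvK : cancel f finv.
Proof.
by move=> w; rewrite /finv; case: pickP => [w' /eqP /f_inj -> //|/(_ w)]; rewrite eqxx.
Qed.

Lemma arc_preimage p : p \in B -> exists a b, p = (f a, f b).
Proof. by case: p => c d /B_in_A /= /andP[/f_onto [a <-] /f_onto [b <-]]; exists a, b. Qed.

Lemma has_relaxed_iso k : has_relaxed B k -> has_relaxed (arcs F) k.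
Proof.
apply: (has_relaxed_transfer (g := fun e => Some (finv e.1, finv e.2)) (f := finv)).
- move=> e1 e2 e' /arc_preimage [a [b ->]] /arc_preimage [a' [b' ->]] /= [<-] [].
  by rewrite !finvK => -> ->.
- move=> [a b]; rewrite inE /= f_arcs; split=> [abB|[e eB]].
    by exists (f a, f b); rewrite //= !finvK.
  by case/arc_preimage: (eB) => c [d E]; rewrite E /= !finvK in eB * => -[<- <-].
- move=> X XB; apply/subsetP => v /boundaryP [u [w [uvF uvX]]].
  rewrite inE => /existsP[e /andP[eX /eqP ge]].
  have [c [d E]] := arc_preimage (subsetP XB _ eX); subst e.
  move: ge uvF uvX; rewrite /= !finvK => -[<- _]; rewrite inE /= f_arcs => ucB ucX.
  apply/imsetP; exists (f c); last by rewrite finvK.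
  apply/boundaryP; exists (f u), (f d); split=> //.
  apply: contra ucX => ucX; rewrite inE; apply/existsP; exists (f u, f c).
  by rewrite ucX /= !finvK.
Qed.

End Isomorphism.

Lemma connect_avoid (T : finType) (r : rel T) (u a b : T) :
  symmetric r -> #|[set c | r u c]| <= 1 -> a != u -> b != u -> connect r a b ->
  exists p, [/\ path r a p, last a p = b & u \notin p].
Proof.
move=> sym_r deg_u au bu /connectP [p0 pth0 lst]; subst b.
case: (shortenP pth0) bu => p pth uniq_p _ bu.
exists p; split=> //; apply/negP => up; move: pth uniq_p bu.
case/splitPr: up => p1 p2; case: p2 => [|s p2]; first by rewrite last_cat /= eqxx.
rewrite cat_path -cat_cons cat_uniq => /andP[_ /and3P[r1 r2 _]] /and3P[_ disj _] _.
(* u would have the two distinct neighbours [last a p1] and [s] *)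
have s_new : s \notin a :: p1.
  by apply: contra disj => s_in; apply/hasP; exists s; rewrite // !inE eqxx orbT.
have neq : last a p1 != s by apply: contraNneq s_new => <-; exact: mem_last.
have : #|[set last a p1; s]| <= #|[set c | r u c]|.
  by apply: subset_leq_card; apply/subsetP => c; rewrite !inE => /orP[] /eqP ->; rewrite // sym_r.
by rewrite cards2 neq => /leq_trans /(_ deg_u).
Qed.

Section RemoveNode.
Variables (n : nat) (u : 'I_n.+2).

Definition remove_node (r : rel 'I_n.+2) : rel 'I_n.+1 :=
  fun i j => r (lift u i) (lift u j).

Lemma connect_remove_node (r : rel 'I_n.+2) : symmetric r -> #|[set c | r u c]| <= 1 ->
  forall i j, connect (remove_node r) i j = connect r (lift u i) (lift u j).
Proof.
move=> sym_r deg_u i j; apply/idP/idP.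
- move=> /connectP [p pth lst]; apply/connectP; exists (map (lift u) p).
  + by rewrite path_map.
  + by rewrite last_map lst.
- have lift_neq v : lift u v != u by rewrite eq_sym neq_lift.
  move=> /(connect_avoid sym_r deg_u (lift_neq i) (lift_neq j)) [q [pth lst uq]].
  pose h v := odflt ord0 (unlift u v).
  have hq : map (lift u) (map h q) = q.
    rewrite -map_comp map_id_in // => v vq /=; rewrite /h.
    by case: unliftP => [v' -> //|E]; rewrite -E vq in uq.
  apply/connectP; exists (map h q); first by rewrite -path_map hq.
  by apply: (@lift_inj _ u); rewrite -last_map hq lst.
Qed.

Lemma tdeg_remove_node (t : rel 'I_n.+2) i :
  tdeg (remove_node t) i <= tdeg t (lift u i).
Proof.
rewrite /tdeg -(card_imset _ (@lift_inj _ u)); apply: subset_leq_card.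
by apply/subsetP => c /imsetP[j]; rewrite !inE => tij ->.
Qed.

Lemma del_edge_remove_node (t : rel 'I_n.+2) i j :
  del_edge (remove_node t) i j =2 remove_node (del_edge t (lift u i) (lift u j)).
Proof. by move=> v w; rewrite /del_edge /remove_node !(inj_eq lift_inj). Qed.

End RemoveNode.

Lemma del_edge_sym n (t : rel 'I_n) a b : symmetric t -> symmetric (del_edge t a b).
Proof.
move=> sym_t v w; rewrite /del_edge sym_t; congr (_ && ~~ _).
by case: (v == a); case: (v == b); case: (w == a); case: (w == b).
Qed.

Lemma tdeg_del_edge n (t : rel 'I_n.+1) a b c : tdeg (del_edge t a b) c <= tdeg t c.
Proof. by apply: subset_leq_card; apply/subsetP => d; rewrite !inE => /andP[]. Qed.

Lemma relaxed_remove_leaf (V : finType) (B : {set V * V}) n (t : rel 'I_n.+2) lab k u :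
  relaxed_decomp B t lab k -> lab u = None -> tdeg t u <= 1 ->
  relaxed_decomp B (remove_node u t) (fun i => lab (lift u i)) k.
Proof.
move=> [[sym_t [irr_t [conn_t bridge_t]]] deg leaf inj onto wd] lu du.
have del_conn i j v w : connect (del_edge (remove_node u t) i j) v w =
    connect (del_edge t (lift u i) (lift u j)) (lift u v) (lift u w).
  rewrite (eq_connect (del_edge_remove_node u t i j)) connect_remove_node //.
    exact: del_edge_sym.
  exact: leq_trans (tdeg_del_edge _ _ _ _) du.
split=> [|a|a la|a b e la lb|e|i j tij].
- split=> [i j|]; first exact: sym_t.
  split=> [i|]; first exact: irr_t.
  split=> [i j|i j tij]; first by rewrite connect_remove_node.
  by rewrite del_conn; apply: bridge_t.
- exact: leq_trans (tdeg_remove_node _ _ _) (deg _).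
- exact: leq_trans (tdeg_remove_node _ _ _) (leaf _ la).
- by apply: (@lift_inj _ u); apply: inj la lb.
- split=> [/onto [a la]|[a la]]; last by apply/onto; exists (lift u a).
  by move: la; case: (unliftP u a) => [a' ->|->]; [exists a' | rewrite lu].
- rewrite /relaxed_width.
  suff -> : side_arcs (remove_node u t) (fun i => lab (lift u i)) i j =
            side_arcs t lab (lift u i) (lift u j) by exact: wd.
  apply/setP => e; rewrite !inE; apply/existsP/existsP => [[l]|[l]].
    by rewrite del_conn => cl; exists (lift u l).
  case: (unliftP u l) => [l' ->|->]; last by rewrite lu andbF.
  by rewrite -del_conn => cl; exists l'.
Qed.

Definition has_decomp (V : finType) (E : rel V) (k : nat) : Prop :=
  exists n (t : rel 'I_n.+1) beta, branch_decomp E t beta /\ decomp_width E t beta <= k.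

(* a relaxed decomposition whose leaves are all labelled is a branch
   decomposition; unlabelled inner nodes get an arbitrary dummy arc e0 *)
Lemma relaxed_to_decomp (V : finType) (E : rel V) n (t : rel 'I_n.+1) lab k (e0 : V * V) :
  relaxed_decomp (arcs E) t lab k -> (forall a, tdeg t a <= 1 -> lab a != None) ->
  has_decomp E k.
Proof.
move=> [tr deg leaf inj onto wd] labelled.
have leavesE a : (a \in leaves t) = (lab a != None).
  by rewrite inE; apply/idP/idP; [exact: labelled | exact: leaf].
exists n, t, (fun a => odflt e0 (lab a)); split.
  split=> //; split=> //; split=> [l|].
    by rewrite leavesE; case El: (lab l) => //= _; apply/onto; exists l.
  split=> [a b|e /onto [a la]]; last by exists a; rewrite ?leavesE la.
  rewrite !leavesE; case Ea: (lab a) => [ea|] //; case Eb: (lab b) => [eb|] //= _ _ eab.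
  by subst eb; exact: inj Ea Eb.
apply/bigmax_leqP => [[a b]] /= tab; apply: leq_trans (wd a b tab).
rewrite /edge_width /relaxed_width.
suff -> : (fun a => odflt e0 (lab a)) @: side_leaves t a b = side_arcs t lab a b by [].
apply/setP => e; rewrite inE; apply/imsetP/existsP => [[l]|[l /andP[cl /eqP le]]].
  by rewrite inE leavesE => /andP[ll cl] ->; exists l; rewrite cl /=; case: (lab l) ll.
by exists l; [rewrite inE leavesE le cl | rewrite le].
Qed.

Lemma relaxed_prune (V : finType) (E : rel V) k n (t : rel 'I_n.+1) lab :
  relaxed_decomp (arcs E) t lab k -> arcs E != set0 -> has_decomp E k.
Proof.
(* either some leaf is unlabelled, or the decomposition is already genuine *)
elim: n t lab => [|n IH] t lab rd /set0Pn [e0 e0E];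
  have [/existsP [u /andP[/eqP lu du]]|/existsPn labelled] :=
    boolP [exists u, (lab u == None) && (tdeg t u <= 1)];
  try by apply: (relaxed_to_decomp e0 rd) => a da; move: (labelled a); rewrite da andbT.
- (* the only node of a one-node tree must carry the arc e0 *)
  have [a la] := (rd_onto rd e0).1 e0E.
  by move: la; rewrite (ord1 a) -(ord1 u) lu.
- apply: IH (relaxed_remove_leaf rd lu du) _.
  by apply/set0Pn; exists e0.
Qed.

Lemma connect_invariant (T : finType) (r : rel T) (P : T -> Prop) x y :
  (forall v w, r v w -> P v -> P w) -> connect r x y -> P x -> P y.
Proof.
move=> stepP /connectP [p pth ->]; elim: p x pth => [|z p IH] x //= /andP[rxz pth] Px.
exact: IH pth (stepP _ _ rxz Px).
Qed.

(* The heap tree on {0, ..., 2m+1}: node i > 0 has parent (i-1)/2, so the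
   nodes m+1, ..., 2m+1 are leaves; it carries m+1 arcs on its leaves. *)
Definition parent (i : nat) : nat := i.-1 %/ 2.

Lemma iter_parent_le k i : iter k parent i <= i.
Proof. by elim: k => [|k IH] //=; apply: leq_trans _ IH; rewrite {1}/parent; lia. Qed.

Section Heap.
Variable m : nat.

Definition heap : rel 'I_(m.*2.+2) :=
  fun i j => ((i != 0 :> nat) && (parent i == j)) || ((j != 0 :> nat) && (parent j == i)).

Lemma heap_sym : symmetric heap.
Proof. by move=> i j; rewrite /heap orbC. Qed.

Lemma heap_irr : irreflexive heap.
Proof. by move=> i; rewrite /heap orbb /parent; apply/negP; lia. Qed.

Lemma heap_connect_root (i : 'I_(m.*2.+2)) : connect heap i ord0.
Proof.
elim/ltn_ind: {i}(nat_of_ord i) {1 3}i (erefl (nat_of_ord i)) => k IH i ik; subst k.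
have [i0|i0] := eqVneq (nat_of_ord i) 0; first by rewrite (_ : i = ord0) //; apply: val_inj.
have lt_pi : parent i < m.*2.+2 by rewrite /parent; have := ltn_ord i; lia.
apply: connect_trans (IH _ _ (Ordinal lt_pi) erefl); last by rewrite /= /parent; lia.
by apply: connect1; rewrite /heap i0 eqxx.
Qed.

Lemma heap_connect u v : connect heap u v.
Proof.
apply: connect_trans (heap_connect_root u) _.
by rewrite (sym_connect_sym heap_sym) heap_connect_root.
Qed.

(* every node reachable from a after deleting the edge to its parent b is a
   descendant of a, and b is not one *)
Lemma heap_bridge_parent (a b : 'I_(m.*2.+2)) : (a != 0 :> nat) -> parent a = b ->
  ~~ connect (del_edge heap a b) a b.
Proof.
move=> a0 pab; apply/negP => ab_conn.
pose descendant (v : 'I_(m.*2.+2)) := exists k, iter k parent v = a.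
have [k hk] : descendant b; last by have := iter_parent_le k b; rewrite hk -pab /parent; lia.
apply: (connect_invariant _ ab_conn); last by exists 0.
move=> v w; rewrite /del_edge /heap.
move=> /andP[/orP[/andP[v0 /eqP pv]|/andP[w0 /eqP pw]] not_ab] [k hk].
- case: k hk => [|k] /= hk; last by exists k; rewrite -pv -iterSr.
  have va : v = a by apply: val_inj.
  have wb : w = b by apply: val_inj; rewrite /= -pv -pab va.
  by move: not_ab; rewrite va wb !eqxx.
- by exists k.+1; rewrite iterSr pw.
Qed.

Lemma heap_bridge a b : heap a b -> ~~ connect (del_edge heap a b) a b.
Proof.
rewrite {1}/heap => /orP[/andP[a0 /eqP pab]|/andP[b0 /eqP pba]].
  exact: heap_bridge_parent.
have E : del_edge heap a b =2 del_edge heap b a.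
  move=> v w; rewrite /del_edge; congr (_ && ~~ _).
  by case: (v == a); case: (v == b); case: (w == a); case: (w == b).
rewrite (eq_connect E) (sym_connect_sym (del_edge_sym _ _ heap_sym)).
exact: heap_bridge_parent.
Qed.

Lemma heap_tree : is_tree heap.
Proof.
split; first exact: heap_sym; split; first exact: heap_irr.
by split; [exact: heap_connect | exact: heap_bridge].
Qed.

Lemma heap_neighbours (i j : 'I_(m.*2.+2)) : heap i j ->
  [|| j == parent i :> nat, j == (i : nat).*2.+1 :> nat | j == (i : nat).*2.+2 :> nat].
Proof. by rewrite /heap /parent; lia. Qed.

Lemma heap_deg (i : 'I_(m.*2.+2)) : tdeg heap i <= 3.
Proof.
pose s : seq 'I_(m.*2.+2) :=
  [:: inord (parent i); inord (i : nat).*2.+1; inord (i : nat).*2.+2].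
apply: (@leq_trans #|s|); last exact: card_size.
apply: subset_leq_card; apply/subsetP => j; rewrite inE => /heap_neighbours.
by case/or3P => /eqP ji; rewrite -(inord_val j) ji !inE eqxx ?orbT.
Qed.

Lemma heap_leaf (i : 'I_(m.*2.+2)) : m < i -> tdeg heap i <= 1.
Proof.
move=> mi; apply: (@leq_trans #|[:: inord (parent i) : 'I_(m.*2.+2)]|); last exact: card_size.
apply: subset_leq_card; apply/subsetP => j; rewrite inE => /heap_neighbours nb.
have := ltn_ord j; case/or3P: nb => /eqP ji; try lia.
by rewrite -(inord_val j) ji !inE eqxx.
Qed.

End Heap.

(* every digraph with an arc has a branch decomposition: label the leaves
   m+1, ..., 2m+1 of the heap tree by the m+1 arcs (widths are trivially at
   most #|V|), then prune the unlabelled leaves *)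
Lemma exists_decomp (V : finType) (E : rel V) : arcs E != set0 -> has_decomp E #|V|.
Proof.
move=> ne; have /set0Pn [e0 _] := ne.
pose s := enum (arcs E); have size_s : size s = #|arcs E| by rewrite /s -cardE.
have : 0 < #|arcs E| by rewrite card_gt0.
case Em : #|arcs E| => [|m] // _.
pose lab (i : 'I_(m.*2.+2)) := if m < i then Some (nth e0 s (i - m.+1)) else None.
apply: (relaxed_prune (t := @heap m) (lab := lab) _ ne).
split=> [|||a b e|e|a b _]; [exact: heap_tree | exact: heap_deg | | | | exact: max_card].
- by move=> a; rewrite /lab; case: ifP => // ma _; exact: heap_leaf.
- rewrite /lab; case: ifP => // ma [<-]; case: ifP => // mb [].
  have la := ltn_ord a; have lb := ltn_ord b.
  move/eqP; rewrite nth_uniq ?enum_uniq ?size_s ?Em; try lia.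
  by move=> /eqP ab; apply: ord_inj; lia.
- split=> [eE|[a]]; last first.
    rewrite /lab; case: ifP => // ma [<-]; rewrite -mem_enum; apply: mem_nth.
    by rewrite size_s Em; have := ltn_ord a; lia.
  have ie : index e s < m.+1 by rewrite -Em -size_s index_mem mem_enum.
  exists (inord (index e s + m.+1)); rewrite /lab inordK; last by lia.
  by rewrite ifT ?addnK ?nth_index ?mem_enum //; lia.
Qed.

Lemma exists_least (P : nat -> Prop) j : P j -> exists k, P k /\ forall i, P i -> k <= i.
Proof.
elim/ltn_ind: j => j IH Pj.
have [[i [ij Pi]]|no_less] := classic (exists i, i < j /\ P i); first exact: IH ij Pi.
exists j; split=> // i Pi; rewrite leqNgt; apply/negP => ij; by apply: no_less; exists i.
Qed.

Lemma dbw_spec (V : finType) (E : rel V) :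
  dbw_attained E (dbw E) /\ forall j, dbw_attained E j -> dbw E <= j.
Proof.
pose P k := dbw_attained E k /\ forall j, dbw_attained E j -> k <= j.
change (P (epsilon (inhabits 0%N) P)); apply: epsilon_spec.
have [j Pj] : exists j, dbw_attained E j.
  have [/eqP E0|ne] := boolP (arcs E == set0); first by exists 0; left.
  have [n [t [beta [bd _]]]] := exists_decomp ne.
  by exists (decomp_width E t beta); right; exists n, t, beta.
exact: exists_least Pj.
Qed.

Lemma dbw_edgeless (V : finType) (E : rel V) : arcs E = set0 -> dbw E = 0.
Proof. by move=> E0; apply/eqP; rewrite -leqn0; apply: (dbw_spec E).2; left. Qed.

Lemma relaxed_of_dbw (V : finType) (E : rel V) : has_relaxed (arcs E) (dbw E).
Proof.
case: (dbw_spec E).1 => [[E0 ->]|[n [t [beta [bd <-]]]]].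
  (* D is edgeless: a single unlabelled node *)
  exists 0, (fun _ _ => false), (fun _ => None); split=> // [|a|e].
  - by split=> //; split=> //; split=> // u v; rewrite (ord1 u) (ord1 v) connect0.
  - by rewrite /tdeg (leq_trans (max_card _)) ?card_ord.
  - by rewrite E0 in_set0; split=> // [[]].
have [tr [deg [beta_arcs [beta_inj beta_onto]]]] := bd.
pose lab l := if l \in leaves t then Some (beta l) else None.
exists n, t, lab; split=> // [a|a b e|e|a b tab].
- by rewrite /lab; case: ifP => //; rewrite inE.
- rewrite /lab; case: ifP => // la [<-]; case: ifP => // lb [eb].
  exact: beta_inj la lb (esym eb).
- split=> [/beta_onto [l ll <-]|[a]]; first by exists l; rewrite /lab ll.
  by rewrite /lab; case: ifP => // la [<-]; exact: beta_arcs.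
- rewrite /relaxed_width; have -> : side_arcs t lab a b = beta @: side_leaves t a b.
    apply/setP => e; rewrite inE; apply/existsP/imsetP => [[l /andP[cl]]|[l]].
      by rewrite /lab; case: ifP => // ll /eqP[<-]; exists l; rewrite // inE ll.
    by rewrite inE => /andP[ll cl] ->; exists l; rewrite cl /lab ll eqxx.
  exact: (@leq_bigmax_cond _ (fun p : 'I_n.+1 * 'I_n.+1 => t p.1 p.2)
            (fun p => edge_width E t beta p.1 p.2) (a, b) tab).
Qed.

Lemma dbw_le_relaxed (V : finType) (E : rel V) k : has_relaxed (arcs E) k -> dbw E <= k.
Proof.
move=> [n [t [lab rd]]].
have [/eqP E0|ne] := boolP (arcs E == set0); first by rewrite dbw_edgeless.
have [m [t' [beta [bd w]]]] := relaxed_prune rd ne.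
by apply: leq_trans w; apply: (dbw_spec E).2; right; exists m, t', beta.
Qed.

Lemma contracts_relaxed (V : finType) (G G' : sdigraph V) k :
  contracts G G' -> wf_sdigraph G -> has_relaxed G.2 k ->
  has_relaxed G'.2 k /\ wf_sdigraph G'.
Proof.
elim=> {G G'} [//|G x y G' bxy _ IH] wfG relG.
have loopless p : p \in G.2 -> p.1 != p.2 by move=> /wfG /and3P[].
by apply: IH; [exact: contract_wf | exact: has_relaxed_contract].
Qed.

Theorem mainTheorem13 (V : finType) (E : rel V) (W : finType) (F : rel W) :
  irreflexive E -> irreflexive F ->
  butterfly_minor F E -> dbw F <= dbw E.
Proof.
move=> irrE _ [A [B [BE [B_in_A [G' [contr_G' [f [f_inj [f_onto f_arcs]]]]]]]]].
(* D is loopless, hence so is its subgraph (A, B) *)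
have wf_AB : wf_sdigraph (A, B).
  move=> p pB; case/andP: (B_in_A p pB) => -> -> /=; have := subsetP BE p pB; rewrite inE.
  by apply: contraTneq => ->; rewrite irrE.
have [relG' wfG'] := contracts_relaxed contr_G' wf_AB (has_relaxed_sub BE (relaxed_of_dbw E)).
(* if H has an arc, W is inhabited and H inherits the decomposition of G' *)
have [/eqP F0|/set0Pn [[w0 _] _]] := boolP (arcs F == set0); first by rewrite dbw_edgeless.
apply: dbw_le_relaxed; apply: (has_relaxed_iso f_inj f_onto f_arcs _ w0 relG').
by move=> p /wfG' /and3P[-> ->].
Qed.
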